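(* Let $s$ be a positive integer and $G$ an undirected graph. There exists an $(s,s)$-dissolution for $G$ if and only if $G$ has a perfect matching.
   Context: For $V'\subseteq V(G)$ let $Z(V',G):=\{(x,y)\mid x\in V',\ y\in V(G)\setminus V',\ \{x,y\}\in E(G)\}$. For positive integers $s,\Delta_s$, an $(s,\Delta_s)$-dissolution for $G$ is a pair $(D,z)$ with $D\subset V(G)$ and $z\colon Z(D,G)\to\{0,\dots,s\}$ such that (a) each $v'\in D$ satisfies $\sum_{(v',v)\in Z(D,G)} z(v',v)=s$, and (b) each $v\in V(G)\setminus D$ satisfies $\sum_{(v',v)\in Z(D,G)} z(v',v)=\Delta_s$. *)

From mathcomp Require Import all_boot.
Set Implicit Arguments. Unset Strict Implicit. Unset Printing Implicit Defensive.

(* A finite undirected (simple) graph: vertex type T : finType and an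
   adjacency relation e : rel T, assumed symmetric and irreflexive in the
   theorem.  V(G) = T, E(G) = { {x,y} | e x y }. *)

Definition inZ (T : finType) (e : rel T) (D : {set T}) (x y : T) : bool :=
  [&& x \in D, y \notin D & e x y].

(* (s, Ds)-dissolution (D, z).  z is represented as a total function
   T -> T -> nat; only its values on Z(D,G) matter, and those must lie in
   {0,...,s}. *)
Definition is_dissolution (T : finType) (e : rel T) (s Ds : nat)
    (D : {set T}) (z : T -> T -> nat) : Prop :=
  [/\ (forall x y, inZ e D x y -> z x y <= s),
      (forall v', v' \in D -> \sum_(v | inZ e D v' v) z v' v = s) &
      (forall v, v \notin D -> \sum_(v' | inZ e D v' v) z v' v = Ds)].

Definition has_dissolution (T : finType) (e : rel T) (s Ds : nat) : Prop :=
  exists (D : {set T}) (z : T -> T -> nat), is_dissolution e s Ds D z.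

Definition is_perfect_matching (T : finType) (e : rel T) (M : {set {set T}}) : Prop :=
  (forall E, E \in M -> exists x y, [/\ x != y, e x y & E = [set x; y]]) /\
  (forall v : T, #|[set E in M | v \in E]| = 1).

Definition has_perfect_matching (T : finType) (e : rel T) : Prop :=
  exists M : {set {set T}}, is_perfect_matching e M.

From mathcomp Require Import all_boot.
From mathcomp Require Import zify.
Set Implicit Arguments. Unset Strict Implicit. Unset Printing Implicit Defensive.

(* Double counting gives
   |D| = |V \ D| and Hall's condition for the edges of positive weight, so by
   Hall's theorem D is matched bijectively onto V \ D along edges: a perfect
   matching.  Conversely, putting one endpoint of each matching edge into D
   and weight s on that edge yields an (s,s)-dissolution. *)

Section Hall.

Variable T : finType.
Implicit Types (r : rel T) (A S X : {set T}).

Definition nbh r S : {set T} := [set y | [exists x in S, r x y]].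

Definition rel_avoid r X : rel T := [rel x y | r x y && (y \notin X)].

Definition hall_condition r A := forall S, S \subset A -> #|S| <= #|nbh r S|.

Definition has_sdr r A :=
  exists f : T -> T, {in A &, injective f} /\ {in A, forall x, r x (f x)}.

Lemma nbhP r S y : reflect (exists2 x, x \in S & r x y) (y \in nbh r S).
Proof. by rewrite inE; apply: exists_inP. Qed.

Lemma nbhU r S1 S2 : nbh r (S1 :|: S2) = nbh r S1 :|: nbh r S2.
Proof.
apply/setP=> y; rewrite in_setU; apply/nbhP/orP.
  by case=> x; rewrite inE => /orP[] xS rxy; [left | right]; apply/nbhP; exists x.
by case=> /nbhP[x xS rxy]; exists x; rewrite // inE xS ?orbT.
Qed.

Lemma nbh_avoid r X S : nbh (rel_avoid r X) S = nbh r S :\: X.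
Proof.
apply/setP=> y; rewrite in_setD andbC; apply/nbhP/andP.
  by case=> x xS /andP[rxy yX]; split=> //; apply/nbhP; exists x.
by case=> /nbhP[x xS rxy] yX; exists x => //; apply/andP.
Qed.

Lemma sdr_glue r A S0 X (f0 : T -> T) :
    {in S0 &, injective f0} -> {in S0, forall x, r x (f0 x) && (f0 x \in X)} ->
    has_sdr (rel_avoid r X) (A :\: S0) -> has_sdr r A.
Proof.
move=> inj0 rf0 [f [injf rf]].
have rfX x : x \in A -> x \notin S0 -> r x (f x) && (f x \notin X).
  by move=> xA xS0; apply: rf; rewrite inE xS0.
exists (fun x => if x \in S0 then f0 x else f x); split; last first.
  move=> x xA; case: ifPn => xS0; first by case/andP: (rf0 x xS0).
  by case/andP: (rfX x xA xS0).
move=> x y xA yA; case: ifPn => xS0; case: ifPn => yS0.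
- exact: inj0.
- move=> fxy; have /andP[_] := rfX y yA yS0.
  by rewrite -fxy; case/andP: (rf0 x xS0) => _ ->.
- move=> fxy; have /andP[_] := rfX x xA xS0.
  by rewrite fxy; case/andP: (rf0 y yS0) => _ ->.
- by apply: injf; rewrite inE ?xS0 ?yS0.
Qed.

(* A critical set S0 (one with no surplus neighbours) can be matched into its
   own neighbourhood; the rest of A never needs those neighbours. *)
Lemma hall_avoid_critical r A S0 :
    hall_condition r A -> S0 \subset A -> #|nbh r S0| <= #|S0| ->
  hall_condition (rel_avoid r (nbh r S0)) (A :\: S0).
Proof.
move=> hallA sS0A critS0 S sS; rewrite nbh_avoid.
have disjS : [disjoint S & S0].
  apply/pred0P=> x /=; apply/negbTE/andP=> [[/(subsetP sS)]].
  by rewrite inE => /andP[/negbTE->].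
have sSU : S :|: S0 \subset A by rewrite subUset sS0A andbT (subset_trans sS) ?subsetDl.
have := hallA _ sSU; rewrite cardsU disjoint_setI0 // cards0 subn0 nbhU cardsU cardsD.
have := subset_leq_card (subsetIr (nbh r S) (nbh r S0)); rewrite setIC; lia.
Qed.

Lemma hall_avoid_slack r A a b :
    a \in A -> (forall S, S \subset A -> S != set0 -> S != A -> #|S| < #|nbh r S|) ->
  hall_condition (rel_avoid r [set b]) (A :\ a).
Proof.
move=> aA surplus S sS; rewrite nbh_avoid.
have [-> | [x xS]] := set_0Vmem S; first by rewrite cards0.
have sSA : S \subset A by rewrite (subset_trans sS) ?subsetDl.
have SneA : S != A.
  by apply: contraTneq aA => <-; apply/negP=> /(subsetP sS); rewrite !inE eqxx.
have := surplus S sSA (introT (set0Pn S) (ex_intro _ x xS)) SneA.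
rewrite cardsD; have := subset_leq_card (subsetIr (nbh r S) [set b]); rewrite cards1; lia.
Qed.

Theorem hall r A : hall_condition r A -> has_sdr r A.
Proof.
have [n] := ubnP #|A|; elim: n r A => // n IH r A ltAn hallA.
have sub_hall A' : A' \subset A -> hall_condition r A'.
  by move=> sA' S sS; apply: hallA; apply: subset_trans sA'.
have [A0 | [a aA]] := set_0Vmem A; first by exists id; split=> x; rewrite A0 inE.
have smaller A' : A' \subset A -> A' != A -> #|A'| < n.
  move=> sA' A'neA; rewrite -ltnS (leq_trans _ ltAn) // ltnS.
  by rewrite proper_card // properEneq A'neA.
have [/existsP[S0 /and4P[sS0A S0n0 S0neA critS0]] | noCrit] :=
  boolP [exists S0 : {set T},
           [&& S0 \subset A, S0 != set0, S0 != A & #|nbh r S0| <= #|S0|]].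
  have [f0 [inj0 rf0]] := IH r S0 (smaller _ sS0A S0neA) (sub_hall S0 sS0A).
  apply: (sdr_glue (X := nbh r S0) inj0) => [x xS0|].
    by rewrite rf0 //=; apply/nbhP; exists x; last exact: rf0.
  apply: IH; last exact: hall_avoid_critical.
  apply: smaller; first exact: subsetDl.
  apply: contra_neq S0n0 => AS0A; apply/setP=> x; rewrite inE.
  by apply/negbTE/negP=> xS0; have := subsetP sS0A x xS0; rewrite -AS0A inE xS0.
have surplus S : S \subset A -> S != set0 -> S != A -> #|S| < #|nbh r S|.
  move=> sSA Sn0 SneA; rewrite ltnNge; apply: contraNN noCrit => critS.
  by apply/existsP; exists S; rewrite sSA Sn0 SneA.
have /card_gt0P[b /nbhP[_ /set1P-> rab]] : 0 < #|nbh r [set a]|.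
  by have := hallA [set a]; rewrite sub1set cards1; apply.
apply: (sdr_glue (S0 := [set a]) (X := [set b]) (f0 := fun=> b)).
- by move=> x y /set1P-> /set1P->.
- by move=> x /set1P->; rewrite rab set11.
- apply: IH; last exact: hall_avoid_slack.
  apply: smaller; first exact: subsetDl.
  by apply/eqP=> /setP/(_ a); rewrite !inE eqxx aA.
Qed.

End Hall.

Section RegularWeights.

Variables (T : finType) (A B : {set T}) (w : T -> T -> nat) (s : nat).
Hypotheses (s_pos : 0 < s)
  (row_sum : {in A, forall x, \sum_(y in B) w x y = s})
  (col_sum : {in B, forall y, \sum_(x in A) w x y = s}).

Definition weight_support : rel T := [rel x y | (y \in B) && (0 < w x y)].

Lemma regular_card_eq : #|A| = #|B|.
Proof.
apply/eqP; rewrite -(eqn_pmul2r s_pos) -!sum_nat_const; apply/eqP.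
rewrite -(eq_bigr _ row_sum) exchange_big; exact: eq_bigr.
Qed.

Lemma regular_hall : hall_condition weight_support A.
Proof.
move=> S sSA; set N := nbh weight_support S.
have sNB : N \subset B by apply/subsetP=> y /nbhP[x _ /andP[]].
rewrite -(leq_pmul2r s_pos) -!sum_nat_const.
have -> : \sum_(x in S) s = \sum_(x in S) \sum_(y in N) w x y.
  apply: eq_bigr => x xS; rewrite -(row_sum (subsetP sSA x xS)) (big_setID N).
  rewrite (setIidPr sNB) /= [X in _ + X]big1 ?addn0 // => y /setDP[yB yN].
  apply/eqP; rewrite -leqn0 leqNgt; apply: contra yN => wxy.
  by apply/nbhP; exists x => //; apply/andP.
rewrite exchange_big leq_sum // => y yN.
rewrite -(col_sum (subsetP sNB y yN)) [X in _ <= X](big_setID S).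
by rewrite (setIidPr sSA) leq_addr.
Qed.

End RegularWeights.

Section Partner.

Variables (T : finType) (e : rel T).

Definition perfect_partner (p : T -> T) :=
  [/\ involutive p, forall v, p v != v & forall v, e v (p v)].

Lemma perfect_matching_of_partner p : perfect_partner p -> has_perfect_matching e.
Proof.
case=> pK pv_neq epv; exists [set [set v; p v] | v : T]; split.
  by move=> E /imsetP[v _ ->]; exists v, (p v); rewrite eq_sym pv_neq epv.
move=> v; apply/eqP/cards1P; exists [set v; p v]; apply/setP=> E; rewrite !inE.
apply/andP/eqP => [[/imsetP[u _ ->]] | ->]; last first.
  by split; [apply/imsetP; exists v | rewrite setU11].
by rewrite !inE => /orP[]/eqP->; rewrite // pK setUC.
Qed.

Lemma partner_of_perfect_matching :
  symmetric e -> has_perfect_matching e -> exists p, perfect_partner p.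
Proof.
move=> e_sym [M [edgeM coverM]].
have edge_at v : exists2 E0, E0 \in M & [set E in M | v \in E] = [set E0].
  have /cards1P[E0 ME0] : #|[set E in M | v \in E]| == 1 by rewrite coverM.
  by exists E0 => //; have := set11 E0; rewrite -ME0 inE => /andP[].
have edge_unique v E1 E2 : E1 \in M -> E2 \in M -> v \in E1 -> v \in E2 -> E1 = E2.
  move=> E1M E2M vE1 vE2; have [E0 _ ME0] := edge_at v.
  have : E1 \in [set E0] by rewrite -ME0 inE E1M.
  have : E2 \in [set E0] by rewrite -ME0 inE E2M.
  by rewrite !inE => /eqP-> /eqP->.
have partner_ex v : exists u, ([set v; u] \in M) && (u != v).
  have [E0 E0M ME0] := edge_at v.
  have : v \in E0 by have := set11 E0; rewrite -ME0 inE => /andP[].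
  have [a [b [ab _ E0ab]]] := edgeM E0 E0M.
  rewrite E0ab !inE => /orP[]/eqP->; [exists b | exists a].
    by rewrite -E0ab E0M eq_sym ab.
  by rewrite setUC -E0ab E0M ab.
pose p v := xchoose (partner_ex v).
have pP v : ([set v; p v] \in M) && (p v != v) := xchooseP (partner_ex v).
have pK : involutive p.
  move=> v; have /andP[Mv _] := pP v; have /andP[Mpv npv] := pP (p v).
  have E : [set p v; p (p v)] = [set v; p v].
    by apply: (edge_unique (p v)); rewrite // !inE eqxx ?orbT.
  have : p (p v) \in [set v; p v] by rewrite -E !inE eqxx orbT.
  by rewrite !inE (negbTE npv) orbF => /eqP.
exists p; split=> // v; first by case/andP: (pP v).
have /andP[Mv nv] := pP v; have [a [b [_ eab E]]] := edgeM _ Mv.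
have : v \in [set a; b] by rewrite -E setU11.
have : p v \in [set a; b] by rewrite -E !inE eqxx orbT.
rewrite !inE => /orP[]/eqP pva /orP[]/eqP va; move: nv eab.
all: by rewrite pva va ?eqxx // e_sym.
Qed.

Lemma involution_transversal p :
    involutive p -> (forall v, p v != v) ->
  exists D : {set T}, forall v, (p v \in D) = (v \notin D).
Proof.
move=> pK pv_neq; exists [set v | enum_rank v < enum_rank (p v)] => v.
rewrite !inE pK -leqNgt ltn_neqAle.
by rewrite (inj_eq (@ord_inj _)) (inj_eq enum_rank_inj) pv_neq.
Qed.

Lemma dissolution_of_partner s p : perfect_partner p -> has_dissolution e s s.
Proof.
case=> pK pv_neq epv; have [D pD] := involution_transversal pK pv_neq.
have Zp v : v \in D -> inZ e D v (p v) by move=> vD; rewrite /inZ pD negbK vD epv.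
exists D, (fun x y => if p x == y then s else 0); split.
- by move=> x y _; case: ifP.
- move=> x xD; rewrite (bigD1 (p x)) ?Zp //= eqxx big1 ?addn0 // => y /andP[_].
  by rewrite eq_sym => /negbTE->.
- move=> y yD; have pyD : p y \in D by rewrite pD.
  rewrite (bigD1 (p y)) /=; last by have := Zp _ pyD; rewrite pK.
  rewrite pK eqxx big1 ?addn0 // => x /andP[_ xny].
  by rewrite (inv_eq pK) (negbTE xny).
Qed.

End Partner.

Lemma involution_of_bijection (T : finType) (D : {set T}) (f : T -> T) :
    {in D &, injective f} -> {in D, forall x, f x \notin D} -> #|D| = #|~: D| ->
  exists p, [/\ involutive p, {in D, p =1 f} & forall v, (p v \in D) = (v \notin D)].
Proof.
move=> injf fD cardD.
have imfD : f @: D = ~: D.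
  apply/eqP; rewrite eqEcard card_in_imset // cardD leqnn andbT.
  by apply/subsetP=> _ /imsetP[x xD ->]; rewrite inE fD.
pose g v := odflt v [pick x in D | f x == v].
have gP v : v \notin D -> g v \in D /\ f (g v) = v.
  move=> vD; rewrite /g; case: pickP => [x /andP[xD /eqP fxv] | noPre]; first by split.
  have : v \in f @: D by rewrite imfD inE.
  by case/imsetP => x xD fxv; move: (noPre x); rewrite xD fxv eqxx.
pose p v := if v \in D then f v else g v.
exists p; split => [v | v vD | v]; rewrite /p.
- case: (boolP (v \in D)) => vD /=; last by have [-> ->] := gP v vD.
  have [gfvD fgfv] := gP _ (fD v vD); rewrite (negbTE (fD v vD)).
  exact: injf.
- by rewrite vD.
- case: ifPn => vD; first by rewrite (negbTE (fD v vD)).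
  by have [-> _] := gP v vD.
Qed.

Section DissolutionToMatching.

Variables (T : finType) (e : rel T) (s : nat) (D : {set T}) (z : T -> T -> nat).
Hypothesis zD : is_dissolution e s s D z.

Let w x y := if inZ e D x y then z x y else 0.

Lemma dissolution_row_sum : {in D, forall x, \sum_(y in ~: D) w x y = s}.
Proof.
case: zD => _ rowD _ x xD; rewrite -(rowD x xD) big_mkcond [RHS]big_mkcond.
by apply: eq_bigr => y _; rewrite /w /inZ inE xD; case: (y \in D).
Qed.

Lemma dissolution_col_sum : {in ~: D, forall y, \sum_(x in D) w x y = s}.
Proof.
case: zD => _ _ colD y; rewrite inE => yD.
rewrite -(colD y yD) big_mkcond [RHS]big_mkcond.
by apply: eq_bigr => x _; rewrite /w /inZ yD; case: (x \in D).
Qed.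

Lemma dissolution_partner : symmetric e -> 0 < s -> exists p, perfect_partner e p.
Proof.
move=> e_sym s_pos.
have rows := dissolution_row_sum; have cols := dissolution_col_sum.
have [f [injf rf]] := hall (regular_hall s_pos rows cols).
have Zf x : x \in D -> inZ e D x (f x) by move=> /rf /andP[_]; rewrite /w; case: ifP.
have fD x : x \in D -> f x \notin D by case/Zf/and3P.
have [p [pK pf pD]] := involution_of_bijection injf fD (regular_card_eq s_pos rows cols).
exists p; split=> // v.
  by apply/eqP=> pvv; have := pD v; rewrite pvv; case: (v \in D).
have [vD | vD] := boolP (v \in D); first by rewrite pf //; case/Zf/and3P: vD.
have pvD : p v \in D by rewrite pD.
by rewrite e_sym -{2}(pK v) (pf (p v) pvD); case/Zf/and3P: pvD.
Qed.

End DissolutionToMatching.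

Theorem corollary3 (T : finType) (e : rel T) (s : nat)
  (e_sym : symmetric e) (e_irr : irreflexive e) (s_pos : 0 < s) :
  has_dissolution e s s <-> has_perfect_matching e.
Proof.
split=> [[D [z zD]] | /(partner_of_perfect_matching e_sym) [p pp]].
  have [p pp] := dissolution_partner zD e_sym s_pos.
  exact: perfect_matching_of_partner pp.
exact: dissolution_of_partner pp.
Qed.
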